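(* Let $S$ be a semiring. A left $S$-semimodule $P$ is $k$-projective if and only if every short exact sequence of left $S$-semimodules $0\to A\xrightarrow{f}B\xrightarrow{g}P\to0$ is right-splitting, i.e. there exists an $S$-linear $g':P\to B$ with $g\circ g'=\mathrm{id}_P$.
   Context: A semiring $(S,+,0,\cdot,1)$ consists of a commutative monoid $(S,+,0)$ and a monoid $(S,\cdot,1)$ with $0\neq 1$, absorbing zero and both distributive laws; left $S$-semimodules and $S$-linear maps are as for modules without subtraction. For an $S$-linear $h:X\to Y$, $\mathrm{Ker}(h)=\{x\mid h(x)=0\}$; $h$ is $k$-normal if $h(x)=h(x')$ implies $x+k=x'+k'$ for some $k,k'\in\mathrm{Ker}(h)$; a normal epimorphism is a surjective $k$-normal map. A short exact sequence $0\to A\xrightarrow{f}B\xrightarrow{g}C\to0$ means: $f$ injective, $f(A)=\mathrm{Ker}(g)$, $g$ surjective and $k$-normal. $P$ is $k$-projective if for every left $S$-semimodule $M$, every normal epimorphism $f:M\to N$ and every $S$-linear $g:P\to N$, there exists an $S$-linear $h:P\to M$ with $f\circ h=g$. *)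

From HB Require Import structures.
From mathcomp Require Import all_boot all_algebra.
Set Implicit Arguments.
Unset Strict Implicit.
Unset Printing Implicit Defensive.
Import GRing.Theory.
Local Open Scope ring_scope.

Section Defs.
Variable S : nzSemiRingType.

Definition slinear (X Y : lSemiModType S) (h : X -> Y) : Prop :=
  h 0 = 0 /\ (forall x y, h (x + y) = h x + h y) /\
  (forall (a : S) x, h (a *: x) = a *: h x).

Definition inKer (X Y : lSemiModType S) (h : X -> Y) (x : X) : Prop := h x = 0.

Definition k_normal (X Y : lSemiModType S) (h : X -> Y) : Prop :=
  forall x x', h x = h x' ->
    exists k k', inKer h k /\ inKer h k' /\ x + k = x' + k'.

Definition normal_epi (X Y : lSemiModType S) (h : X -> Y) : Prop :=
  (forall y, exists x, h x = y) /\ k_normal h.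

Definition short_exact (A B C : lSemiModType S) (f : A -> B) (g : B -> C) : Prop :=
  injective f /\ (forall b, inKer g b <-> exists a, f a = b) /\ normal_epi g.

Definition k_projective (P : lSemiModType S) : Prop :=
  forall (M N : lSemiModType S) (f : M -> N) (g : P -> N),
    slinear f -> normal_epi f -> slinear g ->
    exists h : P -> M, slinear h /\ (forall p, f (h p) = g p).

End Defs.

From HB Require Import structures.
From mathcomp Require Import all_boot all_algebra.
Set Implicit Arguments.
Unset Strict Implicit.
Unset Printing Implicit Defensive.
Import GRing.Theory.
Local Open Scope ring_scope.

(* A k-projective P lifts the identity along any normal epimorphism onto P,
   which is the splitting.  Conversely, to lift g : P -> N along a normal
   epimorphism f : M -> N, form the pullback Q = {(m, p) | f m = g p}: its
   projection onto P is again a normal epimorphism, so it is the cokernel in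
   the short exact sequence Ker -> Q -> P.  A splitting P -> Q followed by the
   projection onto M is the required lift. *)

Section LinearMaps.
Variable S : nzSemiRingType.
Implicit Types X Y Z : lSemiModType S.

Lemma slinear_id X : slinear (fun x : X => x).
Proof. by []. Qed.

Lemma slinear0 X Y : slinear (fun _ : X => 0 : Y).
Proof. by split; [|split=> *; rewrite ?addr0 ?scaler0]. Qed.

Lemma slinear_fst X Y : slinear (fun x : X * Y => x.1).
Proof. by []. Qed.

Lemma slinear_snd X Y : slinear (fun x : X * Y => x.2).
Proof. by []. Qed.

Lemma slinear_comp X Y Z (f : X -> Y) (g : Y -> Z) :
  slinear f -> slinear g -> slinear (fun x => g (f x)).
Proof.
move=> [f0 [fD fZ]] [g0 [gD gZ]].
by split; [rewrite f0 g0 | split=> *; rewrite ?fD ?gD ?fZ ?gZ].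
Qed.

End LinearMaps.

Section Equalizer.
Variables (S : nzSemiRingType) (X Y : lSemiModType S) (u v : X -> Y).
Hypotheses (hu : slinear u) (hv : slinear v).

Definition equalizer_pred : pred X := fun x => u x == v x.

Lemma equalizer_closed : subsemimod_closed equalizer_pred.
Proof.
case: hu => [u0 [uD uZ]]; case: hv => [v0 [vD vZ]].
rewrite /equalizer_pred; split; [split|] => [|x y|a x]; rewrite ?unfold_in /=.
- by rewrite u0 v0.
- by move=> /eqP ex /eqP ey; rewrite uD vD ex ey.
- by move=> /eqP ex; rewrite uZ vZ ex.
Qed.

(* The linearity proofs are parameters so that the semimodule instance below
   can be found from the type alone. *)
Record equalizer (hu' : slinear u) (hv' : slinear v) :=
  Equalizer { equalizer_val : X; _ : equalizer_pred equalizer_val }.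

HB.instance Definition _ := [isSub for @equalizer_val hu hv].
HB.instance Definition _ := [Choice of equalizer hu hv by <:].
HB.instance Definition _ :=
  GRing.SubChoice_isSubLSemiModule.Build S X equalizer_pred (equalizer hu hv)
    equalizer_closed.

Lemma slinear_equalizer_val :
  slinear (@equalizer_val hu hv : equalizer hu hv -> X).
Proof. by []. Qed.

Lemma equalizer_valP (q : equalizer hu hv) :
  u (equalizer_val q) = v (equalizer_val q).
Proof. by case: q => x /= /eqP. Qed.

Lemma equalizer_valS x : u x = v x -> exists q : equalizer hu hv, equalizer_val q = x.
Proof. by move=> /eqP ex; exists (Equalizer hu hv ex). Qed.

End Equalizer.

Lemma short_exact_kernel (S : nzSemiRingType) (X Y : lSemiModType S)
    (h : X -> Y) (hh : slinear h) :
  normal_epi h -> short_exact (@equalizer_val _ _ _ _ _ hh (slinear0 X Y)) h.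
Proof.
move=> hepi; split; [exact: val_inj | split=> // x].
split; first exact: equalizer_valS.
by case=> k <-; apply: equalizer_valP.
Qed.

Section Pullback.
Variables (S : nzSemiRingType) (M N P : lSemiModType S).
Variables (f : M -> N) (g : P -> N).
Hypotheses (hf : slinear f) (hg : slinear g).

Definition pullback :=
  equalizer (slinear_comp (@slinear_fst S M P) hf)
            (slinear_comp (@slinear_snd S M P) hg).

Definition pullback_fst (q : pullback) : M := (equalizer_val q).1.
Definition pullback_snd (q : pullback) : P := (equalizer_val q).2.

Lemma pullback_comm q : f (pullback_fst q) = g (pullback_snd q).
Proof. exact: (equalizer_valP q). Qed.

Lemma pullback_valS m p : f m = g p -> exists q : pullback, equalizer_val q = (m, p).
Proof. exact: (@equalizer_valS _ _ _ _ _ _ _ (m, p)). Qed.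

Lemma slinear_pullback_fst : slinear pullback_fst.
Proof. exact: slinear_comp (slinear_equalizer_val _ _) (@slinear_fst S M P). Qed.

Lemma slinear_pullback_snd : slinear pullback_snd.
Proof. exact: slinear_comp (slinear_equalizer_val _ _) (@slinear_snd S M P). Qed.

Lemma normal_epi_pullback_snd : normal_epi f -> normal_epi pullback_snd.
Proof.
have [g0 _] := hg.
move=> [fsurj fknormal]; split=> [p | q q' eqq].
  have [m fm] := fsurj (g p).
  have [q eq] := pullback_valS fm.
  by exists q; rewrite /pullback_snd eq.
have /fknormal [k [k' [fk [fk' ekk']]]] : f (pullback_fst q) = f (pullback_fst q').
  by rewrite !pullback_comm eqq.
(* Correct q and q' by the pairs (k, 0) and (k', 0), which lie in the pullback
   and in the kernel of the projection. *)
have [qk eqk] := pullback_valS (etrans fk (esym g0)).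
have [qk' eqk'] := pullback_valS (etrans fk' (esym g0)).
exists qk, qk'; rewrite /inKer /pullback_snd eqk eqk'; do 2 split=> //.
apply: val_inj; rewrite !raddfD /= eqk eqk'.
move: ekk' eqq; rewrite /pullback_fst /pullback_snd.
case: (equalizer_val q) (equalizer_val q') => [m p] [m' p'] /= ekk' ->.
by rewrite -[LHS]/(m + k, p' + 0) -[RHS]/(m' + k', p' + 0) ekk'.
Qed.

End Pullback.

Section Splitting.
Variables (S : nzSemiRingType) (P : lSemiModType S).

Definition right_splitting :=
  forall (A B : lSemiModType S) (f : A -> B) (g : B -> P),
    slinear f -> slinear g -> short_exact f g ->
    exists g' : P -> B, slinear g' /\ (forall p, g (g' p) = p).

Lemma k_projective_right_splitting : k_projective P -> right_splitting.
Proof.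
move=> kP A B f g _ hg [_ [_ gepi]].
exact: kP hg gepi (slinear_id P).
Qed.

Lemma right_splitting_k_projective : right_splitting -> k_projective P.
Proof.
move=> split_P M N f g hf fepi hg.
have hsnd := slinear_pullback_snd hf hg.
have ses := short_exact_kernel hsnd (normal_epi_pullback_snd hf hg fepi).
have [s [hs sK]] := split_P _ _ _ _ (slinear_equalizer_val hsnd (slinear0 _ _)) hsnd ses.
exists (fun p => pullback_fst (s p)); split.
  exact: slinear_comp hs (slinear_pullback_fst hf hg).
by move=> p; rewrite (pullback_comm (s p)) sK.
Qed.

End Splitting.

Theorem mainTheorem8 (S : nzSemiRingType) (P : lSemiModType S) :
  k_projective P <->
  (forall (A B : lSemiModType S) (f : A -> B) (g : B -> P),
     slinear f -> slinear g -> short_exact f g ->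
     exists g' : P -> B, slinear g' /\ (forall p, g (g' p) = p)).
Proof.
split; [exact: k_projective_right_splitting | exact: right_splitting_k_projective].
Qed.
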